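(* Let $M$ be a matroid on $E=[n]$, $t,u$ positive integers, and $\mathcal F$ the regular mixed subdivision of $u\Delta+P(M)+t\nabla$ defined below. Every lattice point of $u\Delta+P(M)+t\nabla$ lies in some top-degree face of $\mathcal F$.
   Context: $M$ is a matroid on $E=[n]=\{1,\dots,n\}$, ordered naturally. $P(M)\subseteq\mathbb R^E$ is the convex hull of the indicator vectors $\mathbf e_B$ of bases $B$. For nonempty $S\subseteq E$, $\Delta_S=\operatorname{conv}\{\mathbf e_i:i\in S\}$, $\nabla_S=-\Delta_S$, $\Delta=\Delta_E$, $\nabla=\nabla_E$. The subdivision: fix positive integers $t,u$ and reals $0<\alpha_1<\dots<\alpha_n$, $0<\beta_1<\dots<\beta_n$. Let $\mathit{Lift}=\operatorname{conv}\{(u\mathbf e_i,\alpha_i)\}+(P(M)\times\{0\})+\operatorname{conv}\{(-t\mathbf e_i,\beta_i)\}\subseteq\mathbb R^E\times\mathbb R$. The lower faces of $\mathit{Lift}$ are the faces on which some linear functional with last coordinate $-1$ attains its maximum; their projections to $\mathbb R^E$ form the regular mixed subdivision $\mathcal F$ of $u\Delta+P(M)+t\nabla$. Each cell is canonically written $F+G+H$ where $F$, $G$, $H$ are the projections of the faces of the three summands of $\mathit{Lift}$ maximizing the same functional, so $F$ is a face of $u\Delta$, $G$ a face of $P(M)$, $H$ a face of $t\nabla$. A top-degree face is a maximal cell $F+G+H$ of $\mathcal F$ in which $G$ is a vertex of $P(M)$. *)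

From HB Require Import structures.
From mathcomp Require Import all_boot all_order all_algebra.
Set Implicit Arguments. Unset Strict Implicit. Unset Printing Implicit Defensive.
Import Order.TTheory GRing.Theory Num.Theory.
Local Open Scope ring_scope.

(* ---------- Matroids on E = 'I_n (E = [n] shifted to 0..n-1) ---------- *)
Record matroid (n : nat) := Matroid {
  bases : {set {set 'I_n}};
  bases_nonempty : bases != set0;
  bases_exchange : forall B1 B2, B1 \in bases -> B2 \in bases ->
    forall x, x \in B1 :\: B2 ->
      exists2 y, y \in B2 :\: B1 & ((B1 :\ x) :|: [set y]) \in bases }.

Section Geo.
Variable R : realFieldType.

Definition subset_pts (K : finType) (S T : (K -> R) -> Prop) :=
  forall x, S x -> T x.

Definition conv (K I : finType) (A : {set I}) (p : I -> K -> R) : (K -> R) -> Prop :=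
  fun x => exists lam : I -> R,
    (forall i, i \in A -> 0 <= lam i) /\ \sum_(i in A) lam i = 1 /\
    forall k, x k = \sum_(i in A) lam i * p i k.

Definition msum3 (K : finType) (S1 S2 S3 : (K -> R) -> Prop) : (K -> R) -> Prop :=
  fun x => exists a b c, S1 a /\ S2 b /\ S3 c /\ forall k, x k = a k + b k + c k.

Definition dot (K : finType) (w x : K -> R) : R := \sum_k w k * x k.

Definition face (K : finType) (S : (K -> R) -> Prop) (w : K -> R) : (K -> R) -> Prop :=
  fun x => S x /\ forall y, S y -> dot w y <= dot w x.

Definition is_vertex (K : finType) (S : (K -> R) -> Prop) (v : K -> R) :=
  exists c : K -> R, forall x, face S c x <-> (forall k, x k = v k).

(* R^E x R is modelled as functions on option 'I_n; None = last coordinate *)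
Definition proj (n : nat) (S : (option 'I_n -> R) -> Prop) : ('I_n -> R) -> Prop :=
  fun x => exists y, S y /\ forall i, y (Some i) = x i.

Definition lowfun (n : nat) (w : 'I_n -> R) : option 'I_n -> R :=
  fun k => match k with Some j => w j | None => -1 end.

Variables (n : nat) (M : matroid n) (t u : nat) (alpha beta : 'I_n -> R).

Definition indic (B : {set 'I_n}) : 'I_n -> R := fun j => if j \in B then 1 else 0.
Definition sunit (c : R) (i : 'I_n) : 'I_n -> R := fun j => if j == i then c else 0.

Definition PM : ('I_n -> R) -> Prop := conv (bases M) indic.
Definition uDelta : ('I_n -> R) -> Prop := conv setT (sunit u%:R).
Definition tNabla : ('I_n -> R) -> Prop := conv setT (sunit (- t%:R)).
Definition bigPoly : ('I_n -> R) -> Prop := msum3 uDelta PM tNabla.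

Definition lift1 : (option 'I_n -> R) -> Prop :=
  conv setT (fun i k => match k with Some j => sunit u%:R i j | None => alpha i end).
Definition lift2 : (option 'I_n -> R) -> Prop :=
  conv (bases M) (fun B k => match k with Some j => indic B j | None => 0 end).
Definition lift3 : (option 'I_n -> R) -> Prop :=
  conv setT (fun i k => match k with Some j => sunit (- t%:R) i j | None => beta i end).
Definition Lift : (option 'I_n -> R) -> Prop := msum3 lift1 lift2 lift3.

(* the cell of the regular mixed subdivision given by the functional (w,-1),
   i.e. the projection of the lower face of Lift, and its canonical summands *)
Definition cell (w : 'I_n -> R) := proj (face Lift (lowfun w)).
Definition cellF (w : 'I_n -> R) := proj (face lift1 (lowfun w)).
Definition cellG (w : 'I_n -> R) := proj (face lift2 (lowfun w)).
Definition cellH (w : 'I_n -> R) := proj (face lift3 (lowfun w)).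

Definition maximal_cell (w : 'I_n -> R) :=
  forall w', subset_pts (cell w) (cell w') -> subset_pts (cell w') (cell w).

Definition top_degree (w : 'I_n -> R) :=
  maximal_cell w /\
  exists v, is_vertex PM v /\ forall x, cellG w x <-> (forall i, x i = v i).

End Geo.

From HB Require Import structures.
From mathcomp Require Import all_boot all_order all_algebra.
From mathcomp Require Import zify lra.
Import Order.TTheory GRing.Theory Num.Theory.
Local Open Scope ring_scope.
Set Implicit Arguments. Unset Strict Implicit. Unset Printing Implicit Defensive.

(* Pick a lattice point x and put S := {i <> 1 : x_i >= 1}, T := {i <> 1 : x_i <= 0}.
   The functional omega (zero at 1, (alpha_i - alpha_1)/u on S, (beta_1 - beta_i)/t on T)
   is injective, so it selects a unique max-weight basis B of M, and its cell is
   conv{u e_i : i notin T} + e_B + conv{-t e_i : i notin S}.  This cell is maximal: any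
   cell containing it contains its vertices, which forces the other functional to differ
   from omega by a constant, and constants do not change lower faces.  Finally x lies in
   it: by the greedy property, B meets the upper set S as much as possible and T as little
   as possible, so y := x - e_B is >= 0 on S with sum at most u and <= 0 on T with sum at
   least -t; the slack is absorbed at the coordinate 1. *)


Lemma sum_option (V : nmodType) (T : finType) (F : option T -> V) :
  \sum_(k : option T) F k = F None + \sum_(i : T) F (Some i).
Proof.
rewrite (bigD1 None) //=; congr (_ + _).
rewrite (reindex_omap Some (fun k => k)) //=; last by case.
by apply: eq_bigl => j; rewrite eqxx.
Qed.

Section ConvexFaces.
Variable R : realFieldType.
Implicit Types (K I : finType).

Lemma eq_dot K (c x y : K -> R) : x =1 y -> dot c x = dot c y.
Proof. by move=> Exy; apply: eq_bigr => k _; rewrite Exy. Qed.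

Lemma dotD3 K (c a b d x : K -> R) :
  (forall k, x k = a k + b k + d k) -> dot c x = dot c a + dot c b + dot c d.
Proof.
by move=> Ex; rewrite /dot -!big_split; apply: eq_bigr => k _; rewrite Ex !mulrDr.
Qed.

Lemma dot_conv K I (A : {set I}) (p : I -> K -> R) (lam : I -> R) (c : K -> R) :
  dot c (fun k => \sum_(i in A) lam i * p i k) = \sum_(i in A) lam i * dot c (p i).
Proof.
rewrite /dot; under eq_bigr => k _ do rewrite mulr_sumr.
rewrite exchange_big /=; apply: eq_bigr => i _; rewrite mulr_sumr.
by apply: eq_bigr => k _; rewrite mulrCA.
Qed.

Section ConvexHull.
Variables (K I : finType) (A : {set I}) (p : I -> K -> R) (c : K -> R).

Lemma conv_dot_le m x :
  conv A p x -> (forall i, i \in A -> dot c (p i) <= m) -> dot c x <= m.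
Proof.
move=> [lam [lam_ge0 [lam_sum Ex]]] le_m; rewrite (eq_dot _ Ex) dot_conv.
apply: le_trans (_ : \sum_(i in A) lam i * m <= m).
  by apply: ler_sum => i Ai; rewrite ler_wpM2l ?lam_ge0 ?le_m.
by rewrite -mulr_suml lam_sum mul1r.
Qed.

Lemma conv_dot_ge m x :
  conv A p x -> (forall i, i \in A -> m <= dot c (p i)) -> m <= dot c x.
Proof.
move=> [lam [lam_ge0 [lam_sum Ex]]] ge_m; rewrite (eq_dot _ Ex) dot_conv.
apply: le_trans (_ : m <= \sum_(i in A) lam i * m) _.
  by rewrite -mulr_suml lam_sum mul1r.
by apply: ler_sum => i Ai; rewrite ler_wpM2l ?lam_ge0 ?ge_m.
Qed.

Lemma conv_dot_eq m x :
  conv A p x -> (forall i, i \in A -> dot c (p i) = m) -> dot c x = m.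
Proof.
move=> Ax Em; apply/eqP; rewrite eq_le (conv_dot_le Ax) ?(conv_dot_ge Ax) //.
  by move=> i /Em ->.
by move=> i /Em ->.
Qed.

Lemma conv_mem x : conv A p x -> exists i, i \in A.
Proof.
move=> [lam [_ [lam_sum _]]]; case: (set_0Vmem A) => [A0 | [i Ai]]; last by exists i.
by move: lam_sum; rewrite A0 big_set0 => /eqP; rewrite eq_sym oner_eq0.
Qed.

Lemma conv_vertex i0 x : i0 \in A -> x =1 p i0 -> conv A p x.
Proof.
move=> Ai0 Ex; exists (fun i => (i == i0)%:R); split; first by move=> i _; rewrite ler0n.
have big_i0 (F : I -> R) : \sum_(i in A) (i == i0)%:R * F i = F i0.
  rewrite (bigD1 i0) //= eqxx mul1r big1 ?addr0 // => i /andP[_ /negbTE->].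
  by rewrite mul0r.
split; last by move=> k; rewrite big_i0 Ex.
by rewrite -[RHS](big_i0 (fun=> 1)); apply: eq_bigr => i _; rewrite mulr1.
Qed.

Lemma face_conv m (lam : I -> R) :
  (forall i, i \in A -> dot c (p i) <= m) -> (forall i, i \in A -> 0 <= lam i) ->
  \sum_(i in A) lam i = 1 -> (forall i, i \in A -> lam i != 0 -> dot c (p i) = m) ->
  face (conv A p) c (fun k => \sum_(i in A) lam i * p i k).
Proof.
move=> le_m lam_ge0 lam_sum on_face; split; first by exists lam.
move=> y Ay; apply: le_trans (conv_dot_le Ay le_m) _.
rewrite dot_conv -[m]mul1r -lam_sum mulr_suml le_eqVlt; apply/orP; left.
apply/eqP/eq_bigr => i Ai.
case: (eqVneq (lam i) 0) => [-> | nz]; first by rewrite !mul0r.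
by rewrite on_face.
Qed.

Lemma face_conv_vertex i0 :
  i0 \in A -> (forall i, i \in A -> i != i0 -> dot c (p i) < dot c (p i0)) ->
  forall x, face (conv A p) c x <-> x =1 p i0.
Proof.
move=> Ai0 lt_i0 x; split; last first.
  move=> Ex; split; first exact: conv_vertex Ex.
  move=> y Ay; rewrite (eq_dot _ Ex); apply: (conv_dot_le Ay) => i Ai.
  by case: (eqVneq i i0) => [-> | ne]; last exact/ltW/lt_i0.
move=> [[lam [lam_ge0 [lam_sum Ex]]] x_max].
have gap_ge0 i : i \in A -> 0 <= lam i * (dot c (p i0) - dot c (p i)).
  move=> Ai; rewrite mulr_ge0 ?lam_ge0 // subr_ge0.
  by case: (eqVneq i i0) => [-> | ne]; last exact/ltW/lt_i0.
have gap_sum : \sum_(i in A) lam i * (dot c (p i0) - dot c (p i)) = 0.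
  apply/eqP; rewrite eq_le sumr_ge0 // andbT.
  under eq_bigr do rewrite mulrBr.
  rewrite sumrB -mulr_suml lam_sum mul1r -dot_conv -(eq_dot _ Ex) subr_le0.
  exact/x_max/(conv_vertex Ai0).
have lam0 i : i \in A -> i != i0 -> lam i = 0.
  move=> Ai ne; have /eqP := psumr_eq0P gap_ge0 gap_sum Ai.
  by rewrite mulf_eq0 subr_eq0 => /orP[/eqP // | /eqP E]; move: (lt_i0 i Ai ne); rewrite E ltxx.
have lam_i0 : lam i0 = 1.
  by rewrite -lam_sum (bigD1 i0) //= big1 ?addr0 // => i /andP[]; apply: lam0.
move=> k; rewrite Ex (bigD1 i0) //= lam_i0 mul1r big1 ?addr0 // => i /andP[Ai ne].
by rewrite lam0 ?mul0r.
Qed.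

End ConvexHull.

Lemma face_msum3 K (S1 S2 S3 : (K -> R) -> Prop) (c a b d : K -> R) :
  face S1 c a -> face S2 c b -> face S3 c d ->
  face (msum3 S1 S2 S3) c (fun k => a k + b k + d k).
Proof.
move=> [S1a a_max] [S2b b_max] [S3d d_max]; split; first by exists a, b, d.
move=> y [a' [b' [d' [S1a' [S2b' [S3d' Ey]]]]]].
rewrite (dotD3 c Ey) (dotD3 c (fun k => erefl)).
by rewrite !lerD ?a_max ?b_max ?d_max.
Qed.

Lemma face_shift K (S : (K -> R) -> Prop) (c c' : K -> R) (m : R) x :
  (forall y, S y -> dot c y = dot c' y + m) -> face S c' x -> face S c x.
Proof.
move=> shift [Sx x_max]; split=> // y Sy.
by rewrite !shift // lerD2r x_max.
Qed.

Lemma dot_lowfun n (w : 'I_n -> R) (y : option 'I_n -> R) :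
  dot (lowfun w) y = dot w (fun j => y (Some j)) - y None.
Proof. by rewrite /dot sum_option /= mulN1r addrC. Qed.

(* Lifts of a common point to two lower faces have the same height. *)
Lemma lower_faces_dot n (S : (option 'I_n -> R) -> Prop) (w w' : 'I_n -> R) x1 x2 :
  proj (face S (lowfun w)) x1 -> proj (face S (lowfun w)) x2 ->
  proj (face S (lowfun w')) x1 -> proj (face S (lowfun w')) x2 ->
  dot w x1 - dot w' x1 = dot w x2 - dot w' x2.
Proof.
move=> [y1 [[S1 max1] E1]] [y2 [[S2 max2] E2]] [y1' [[S1' max1'] E1']] [y2' [[S2' max2'] E2']].
have := max1 _ S1'; have := max1' _ S1; have := max2 _ S2'; have := max2' _ S2.
have := max1 _ S2; have := max2 _ S1; have := max1' _ S2'; have := max2' _ S1'.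
rewrite !dot_lowfun (eq_dot w E1) (eq_dot w E2) (eq_dot w E1') (eq_dot w E2').
rewrite (eq_dot w' E1) (eq_dot w' E2) (eq_dot w' E1') (eq_dot w' E2').
lra.
Qed.

End ConvexFaces.

Section Coordinates.
Variables (R : realFieldType) (n : nat).
Implicit Types (w f : 'I_n -> R) (B A : {set 'I_n}).

Lemma sum_setT f : \sum_(i in setT) f i = \sum_i f i.
Proof. by apply: eq_bigl => i; rewrite inE. Qed.

Lemma sum_dot1 f : \sum_i f i = dot (fun=> 1) f.
Proof. by apply: eq_bigr => i _; rewrite mul1r. Qed.

Lemma dot_sunit w c i : dot w (sunit c i) = w i * c.
Proof.
rewrite /dot (bigD1 i) //= /sunit eqxx big1 ?addr0 // => j /negbTE ->.
by rewrite mulr0.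
Qed.

Lemma sum_sunitr (c : R) (i : 'I_n) : \sum_k sunit c i k = c.
Proof. by rewrite sum_dot1 dot_sunit mul1r. Qed.

Lemma sum_sunit f c i : \sum_(k in setT) f k * sunit c k i = f i * c.
Proof.
rewrite (bigD1 i) ?inE //= /sunit eqxx big1 ?addr0 // => j /andP[_ /negbTE].
by rewrite eq_sym => ->; rewrite mulr0.
Qed.

Lemma dot_indic w B : dot w (indic R B) = \sum_(j in B) w j.
Proof.
rewrite /dot [RHS]big_mkcond /=; apply: eq_bigr => j _; rewrite /indic.
by case: (j \in B); rewrite ?mulr1 ?mulr0.
Qed.

Lemma dot_indicl f A : dot (indic R A) f = \sum_(j in A) f j.
Proof.
rewrite /dot [RHS]big_mkcond /=; apply: eq_bigr => j _; rewrite /indic.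
by case: (j \in A); rewrite ?mul1r ?mul0r.
Qed.

Lemma sum_indic B A : \sum_(j in B) indic R A j = #|B :&: A|%:R.
Proof.
rewrite /indic -big_mkcondr /= -sumr_const.
by apply: eq_bigl => j; rewrite inE.
Qed.

End Coordinates.

Section MaxWeightBasis.
Variables (n : nat) (M : matroid n).
Implicit Types (B U : {set 'I_n}) (x y : 'I_n).

Lemma card_exchange B x y : x \in B -> y \notin B -> #|B :\ x :|: [set y]| = #|B|.
Proof.
move=> Bx B'y; rewrite setUC cardsU1 (cardsD1 x B) Bx inE (negbTE B'y) andbF.
by rewrite add1n.
Qed.

Lemma setD_exchange B1 B2 x y : y \in B2 ->
  (B1 :\ x :|: [set y]) :\: B2 = (B1 :\: B2) :\ x.
Proof.
move=> B2y; apply/setP => v; rewrite !inE.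
by case: (eqVneq v y) => [-> | _]; rewrite ?B2y ?andbF //= orbF andbCA.
Qed.

Lemma bases_card B1 B2 : B1 \in bases M -> B2 \in bases M -> #|B1| = #|B2|.
Proof.
move=> + B2b; elim: {B1}#|B1 :\: B2| {-2}B1 (erefl #|B1 :\: B2|) => [|k IH] B1 dk B1b.
  have sB12 : B1 \subset B2 by rewrite -setD_eq0 -cards_eq0 dk.
  suff sB21 : B2 \subset B1 by apply/eqP; rewrite eqn_leq !subset_leq_card.
  apply/subsetP => x B2x; apply: contraT => B1'x.
  have Dx : x \in B2 :\: B1 by rewrite inE B1'x.
  have [y /setDP[B1y B2'y] _] := bases_exchange B2b B1b Dx.
  by rewrite (subsetP sB12) in B2'y.
have [x Dx] : exists x, x \in B1 :\: B2 by apply/set0Pn; rewrite -card_gt0 dk.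
have [y /setDP[B2y B1'y] B1'b] := bases_exchange B1b B2b Dx.
have [B1x _] := setDP Dx.
rewrite -(card_exchange B1x B1'y); apply: IH B1'b.
by rewrite setD_exchange //; move: dk; rewrite (cardsD1 x (B1 :\: B2)) Dx; case.
Qed.

Variables (R : realFieldType) (w : 'I_n -> R).

Definition weight B := \sum_(j in B) w j.

Definition max_weight_basis B :=
  B \in bases M /\ forall B', B' \in bases M -> weight B' <= weight B.

Lemma weight_exchange B x y : x \in B -> y \notin B ->
  weight (B :\ x :|: [set y]) = weight B - w x + w y.
Proof.
move=> Bx B'y; rewrite /weight setUC big_setU1 /=; last by rewrite inE (negbTE B'y) andbF.
by rewrite (big_setD1 x Bx) /=; lra.
Qed.

Lemma max_weight_basis_exists : exists B, max_weight_basis B.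
Proof.
have /set0Pn [B0 B0b] := bases_nonempty M.
case: (arg_maxP weight B0b) => B Bb B_max.
by exists B; split.
Qed.

Lemma max_weight_basis_exchange Bs B x :
  max_weight_basis Bs -> B \in bases M -> x \in Bs :\: B ->
  exists2 y, y \in B :\: Bs & w y <= w x.
Proof.
move=> [Bsb Bs_max] Bb Dx; have [y Dy Bs'b] := bases_exchange Bsb Bb Dx.
exists y => //; have [Bsx _] := setDP Dx; have [_ Bs'y] := setDP Dy.
by have := Bs_max _ Bs'b; rewrite weight_exchange //; lra.
Qed.

Lemma max_weight_basis_lt Bs B : injective w -> max_weight_basis Bs ->
  B \in bases M -> B != Bs -> weight B < weight Bs.
Proof.
move=> w_inj Bs_max Bb neB; rewrite lt_neqAle Bs_max.2 // andbT.
move: (neB); apply: contra => /eqP eqw.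
have B_max : max_weight_basis B.
  by split=> // B' B'b; rewrite eqw; apply: Bs_max.2.
pose D := (Bs :\: B) :|: (B :\: Bs).
have /set0Pn [x0 Dx0] : D != set0.
  apply: contra neB; rewrite setU_eq0 !setD_eq0 => /andP[sBsB sBBs].
  by rewrite eqEsubset sBsB sBBs.
case: (arg_minP w Dx0) => x Dx x_min.
have no_min B1 B2 : max_weight_basis B1 -> B2 \in bases M -> x \in B1 :\: B2 ->
    {subset B2 :\: B1 <= D} -> False.
  move=> B1_max B2b D12x sD; have [y D21y le_yx] := max_weight_basis_exchange B1_max B2b D12x.
  have eq_xy : x = y by apply/w_inj/eqP; rewrite eq_le le_yx x_min //; apply: sD.
  by have [B1x _] := setDP D12x; have [_] := setDP D21y; rewrite -eq_xy B1x.
case/setUP: Dx => Dx.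
  by exfalso; apply: (no_min Bs B Bs_max Bb Dx) => v Dv; apply/setUP; right.
by exfalso; apply: (no_min B Bs B_max Bs_max.1 Dx) => v Dv; apply/setUP; left.
Qed.

Definition upper_set U := forall a b, a \in U -> b \notin U -> w b < w a.

Lemma max_weight_basis_meet_eq Bs B U : max_weight_basis Bs -> B \in bases M ->
  upper_set U -> B :\: Bs \subset U -> #|B :&: U| = #|Bs :&: U|.
Proof.
move=> Bs_max Bb U_up sBU.
have sBsU : Bs :\: B \subset U.
  apply/subsetP => x Dx; apply: contraT => U'x.
  have [y Dy le_yx] := max_weight_basis_exchange Bs_max Bb Dx.
  by have := U_up _ _ (subsetP sBU _ Dy) U'x; rewrite ltNge le_yx.
have split_meet A1 A2 : A1 :\: A2 \subset U ->
    #|A1 :&: U| = (#|A1 :&: A2 :&: U| + #|A1 :\: A2|)%N.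
  move=> sA; rewrite -(cardsID A2 (A1 :&: U)) setIAC.
  by rewrite -setIDAC (setIidPl sA).
have := cardsID Bs B; have := cardsID B Bs.
rewrite (split_meet _ _ sBU) (split_meet _ _ sBsU) (bases_card Bb Bs_max.1) setIC.
lia.
Qed.

Lemma max_weight_basis_meet Bs B U : max_weight_basis Bs -> B \in bases M ->
  upper_set U -> (#|B :&: U| <= #|Bs :&: U|)%N.
Proof.
move=> Bs_max + U_up; have Bsb := Bs_max.1.
elim: {B}#|B :\: Bs| {-2}B (erefl #|B :\: Bs|) => [|k IH] B dk Bb.
  rewrite (max_weight_basis_meet_eq Bs_max Bb U_up) //.
  by move/eqP: dk; rewrite cards_eq0 => /eqP ->; apply: sub0set.
case: (boolP [exists x, (x \in B :\: Bs) && (x \notin U)]); last first.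
  move=> /existsPn outU; rewrite (max_weight_basis_meet_eq Bs_max Bb U_up) //.
  by apply/subsetP => x Dx; have := outU x; rewrite Dx negbK.
move=> /existsP [x /andP[Dx U'x]].
have [y /setDP[Bsy B'y] B'b] := bases_exchange Bb Bsb Dx.
apply: leq_trans (IH _ _ B'b); last first.
  by rewrite setD_exchange //; move: dk; rewrite (cardsD1 x (B :\: Bs)) Dx; case.
apply: subset_leq_card; apply/subsetP => v; rewrite !inE => /andP[Bv Uv].
by rewrite Uv Bv !andbT; apply/orP; left; apply: contraTneq Uv => ->.
Qed.

Lemma max_weight_basis_meetC Bs B T : max_weight_basis Bs -> B \in bases M ->
  upper_set (~: T) -> (#|Bs :&: T| <= #|B :&: T|)%N.
Proof.
move=> Bs_max Bb T'_up; have := max_weight_basis_meet Bs_max Bb T'_up.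
have := cardsID T B; have := cardsID T Bs; rewrite !setDE (bases_card Bb Bs_max.1).
lia.
Qed.

End MaxWeightBasis.

Section Polytope.
Variables (R : realFieldType) (n : nat) (M : matroid n) (t u : nat).
Implicit Types (x a b c : 'I_n -> R) (A B : {set 'I_n}).

Lemma uDelta_sum a : uDelta u a -> \sum_i a i = u%:R.
Proof.
by move=> Da; rewrite sum_dot1 (conv_dot_eq (m := u%:R) Da) // => i _; rewrite dot_sunit mul1r.
Qed.

Lemma tNabla_sum c : tNabla t c -> \sum_i c i = - t%:R.
Proof.
by move=> Nc; rewrite sum_dot1 (conv_dot_eq (m := - t%:R) Nc) // => i _; rewrite dot_sunit mul1r.
Qed.

Lemma PM_sum B b : B \in bases M -> PM M b -> \sum_i b i = #|B|%:R.
Proof.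
move=> Bb Pb; rewrite sum_dot1 (conv_dot_eq (m := #|B|%:R) Pb) // => B' B'b.
by rewrite dot_indic sumr_const (bases_card B'b Bb).
Qed.

Lemma bigPoly_sum B x : B \in bases M -> bigPoly M t u x ->
  \sum_i x i = u%:R + #|B|%:R - t%:R.
Proof.
move=> Bb [a [b [c [Da [Pb [Nc Ex]]]]]].
rewrite sum_dot1 (dotD3 _ Ex) -!sum_dot1 uDelta_sum // (PM_sum Bb) // tNabla_sum //.
Qed.

Lemma uDelta_sum_sub A a : uDelta u a -> 0 <= \sum_(i in A) a i <= u%:R.
Proof.
move=> Da; rewrite -dot_indicl (conv_dot_le (m := u%:R) Da) ?(conv_dot_ge (m := 0) Da) //
  => i _; rewrite dot_sunit /indic; case: (i \in A); rewrite ?mul1r ?mul0r ?ler0n //.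
Qed.

Lemma tNabla_sum_sub A c : tNabla t c -> - t%:R <= \sum_(i in A) c i <= 0.
Proof.
move=> Nc; rewrite -dot_indicl (conv_dot_le (m := 0) Nc) ?(conv_dot_ge (m := - t%:R) Nc) //
  => i _; rewrite dot_sunit /indic; case: (i \in A);
  rewrite ?mul1r ?mul0r ?lerN2 ?oppr_le0 ?oppr0 ?ler0n //.
Qed.

Lemma conv_Some (I : finType) (A : {set I}) (p : I -> option 'I_n -> R) y :
  conv A p y -> conv A (fun i j => p i (Some j)) (fun j => y (Some j)).
Proof. by move=> [lam [lam_ge0 [lam_sum Ey]]]; exists lam. Qed.

Lemma proj_Lift (alpha beta : 'I_n -> R) y :
  Lift M t u alpha beta y -> bigPoly M t u (fun i => y (Some i)).
Proof.
move=> [a [b [c [La [Lb [Lc Ey]]]]]].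
exists (fun i => a (Some i)), (fun i => b (Some i)), (fun i => c (Some i)).
split; first exact: (conv_Some La).
split; first exact: (conv_Some Lb).
by split; [exact: (conv_Some Lc) | move=> i; apply: Ey].
Qed.

End Polytope.

Section TopDegreeCell.
Variables (R : realFieldType) (n : nat) (M : matroid n) (t u : nat).
Variables (alpha beta : 'I_n -> R) (o : 'I_n) (S : {set 'I_n}).
Hypotheses (t_gt0 : (0 < t)%N) (u_gt0 : (0 < u)%N) (oS : o \notin S).
Hypotheses (alpha_o : forall i, i != o -> alpha o < alpha i) (alpha_inj : injective alpha).
Hypotheses (beta_o : forall i, i != o -> beta o < beta i) (beta_inj : injective beta).

Definition T := [set i | (i != o) && (i \notin S)].

Variant coord_spec (i : 'I_n) : bool -> bool -> bool -> Prop :=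
  | CoordO of i = o : coord_spec i true false false
  | CoordS of i \in S & i != o : coord_spec i false true false
  | CoordT of i \in T & i != o : coord_spec i false false true.

Lemma coordP i : coord_spec i (i == o) (i \in S) (i \in T).
Proof.
rewrite [i \in T]inE; case: (eqVneq i o) => [-> | ne].
  by rewrite (negbTE oS); constructor.
by case: (boolP (i \in S)) => Si; constructor; rewrite // inE ne Si.
Qed.

Lemma sum_coord (f : 'I_n -> R) : \sum_i f i = f o + \sum_(i in S) f i + \sum_(i in T) f i.
Proof.
rewrite (bigD1 o) //= (bigID (mem S)) /= addrA; congr (_ + _ + _); apply: eq_bigl => i.
  by case: (coordP i).
by case: (coordP i).
Qed.

Let uR_gt0 : 0 < u%:R :> R. Proof. by rewrite ltr0n. Qed.
Let tR_gt0 : 0 < t%:R :> R. Proof. by rewrite ltr0n. Qed.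

(* The lifted vertices (u e_i, alpha_i) with i notin T and (-t e_i, beta_i) with i notin S
   are exactly the lowest ones for (omega, -1). *)
Definition omega (i : 'I_n) : R :=
  if i \in S then (alpha i - alpha o) / u%:R
  else if i \in T then (beta o - beta i) / t%:R else 0.

Lemma omega_o : omega o = 0.
Proof. by rewrite /omega (negbTE oS) inE eqxx. Qed.

Lemma omegaS i : i \in S -> omega i = (alpha i - alpha o) / u%:R.
Proof. by rewrite /omega => ->. Qed.

Lemma omegaT i : i \in T -> omega i = (beta o - beta i) / t%:R.
Proof. by rewrite /omega; case: (coordP i). Qed.

Lemma omega_gt0 i : i \in S -> 0 < omega i.
Proof.
move=> Si; rewrite omegaS // divr_gt0 // subr_gt0 alpha_o //.
by apply: contraNneq oS => <-.
Qed.

Lemma omega_lt0 i : i \in T -> omega i < 0.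
Proof.
move=> Ti; rewrite omegaT // pmulr_llt0 ?invr_gt0 // subr_lt0 beta_o //.
by move: Ti; rewrite inE => /andP[].
Qed.

Lemma omega_inj : injective omega.
Proof.
move=> i j.
case: (coordP i) => [-> | Si _ | Ti _]; case: (coordP j) => [-> | Sj _ | Tj _] // Eij.
- by have := omega_gt0 Sj; rewrite -Eij omega_o ltxx.
- by have := omega_lt0 Tj; rewrite -Eij omega_o ltxx.
- by have := omega_gt0 Si; rewrite Eij omega_o ltxx.
- move: Eij; rewrite !omegaS //.
  by move=> /(mulIf (invr_neq0 (lt0r_neq0 uR_gt0))) /addIr /alpha_inj.
- by exfalso; have := omega_gt0 Si; have := omega_lt0 Tj; lra.
- by have := omega_lt0 Ti; rewrite Eij omega_o ltxx.
- by exfalso; have := omega_lt0 Ti; have := omega_gt0 Sj; lra.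
- move: Eij; rewrite !omegaT //.
  by move=> /(mulIf (invr_neq0 (lt0r_neq0 tR_gt0))) /addrI /oppr_inj /beta_inj.
Qed.

Lemma upper_set_S : upper_set omega S.
Proof.
move=> a b Sa; case: (coordP b) => [-> | // | Tb _] _; last first.
  exact: lt_trans (omega_lt0 Tb) (omega_gt0 Sa).
by rewrite omega_o omega_gt0.
Qed.

Lemma upper_set_notT : upper_set omega (~: T).
Proof.
move=> a b; rewrite [b \in _]inE negbK => T'a Tb; apply: lt_le_trans (omega_lt0 Tb) _.
move: T'a; rewrite inE; case: (coordP a) => [-> | Sa _ | //] _; first by rewrite omega_o.
exact/ltW/omega_gt0.
Qed.

Definition vtx1 (i : 'I_n) (k : option 'I_n) : R :=
  if k is Some j then sunit u%:R i j else alpha i.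
Definition vtx2 (B : {set 'I_n}) (k : option 'I_n) : R :=
  if k is Some j then indic R B j else 0.
Definition vtx3 (i : 'I_n) (k : option 'I_n) : R :=
  if k is Some j then sunit (- t%:R) i j else beta i.

Lemma lowfun_vtx1 i : dot (lowfun omega) (vtx1 i) = omega i * u%:R - alpha i.
Proof. by rewrite dot_lowfun dot_sunit. Qed.

Lemma lowfun_vtx3 i : dot (lowfun omega) (vtx3 i) = - (omega i * t%:R) - beta i.
Proof. by rewrite dot_lowfun dot_sunit mulrN. Qed.

Lemma lowfun_vtx1_le i : dot (lowfun omega) (vtx1 i) <= - alpha o.
Proof.
rewrite lowfun_vtx1; case: (coordP i) => [-> | Si _ | Ti ne].
- by rewrite omega_o mul0r sub0r.
- by rewrite omegaS // divfK ?lt0r_neq0 //; lra.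
- have := alpha_o ne; have : omega i * u%:R < 0 by rewrite pmulr_llt0 ?omega_lt0.
  lra.
Qed.

Lemma lowfun_vtx1_eq i : i \notin T -> dot (lowfun omega) (vtx1 i) = - alpha o.
Proof.
rewrite lowfun_vtx1; case: (coordP i) => [-> | Si _ | //] _.
  by rewrite omega_o mul0r sub0r.
by rewrite omegaS // divfK ?lt0r_neq0 //; lra.
Qed.

Lemma lowfun_vtx3_le i : dot (lowfun omega) (vtx3 i) <= - beta o.
Proof.
rewrite lowfun_vtx3; case: (coordP i) => [-> | Si ne | Ti _].
- by rewrite omega_o mul0r oppr0 sub0r.
- have := beta_o ne; have : 0 < omega i * t%:R by rewrite pmulr_lgt0 ?omega_gt0.
  lra.
- by rewrite omegaT // divfK ?lt0r_neq0 //; lra.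
Qed.

Lemma lowfun_vtx3_eq i : i \notin S -> dot (lowfun omega) (vtx3 i) = - beta o.
Proof.
rewrite lowfun_vtx3; case: (coordP i) => [-> | // | Ti _] _.
  by rewrite omega_o mul0r oppr0 sub0r.
by rewrite omegaT // divfK ?lt0r_neq0 //; lra.
Qed.

Variable Bs : {set 'I_n}.
Hypothesis Bs_max : max_weight_basis M omega Bs.

Lemma face_lift2 y : face (lift2 M) (lowfun omega) y <-> y =1 vtx2 Bs.
Proof.
apply: (face_conv_vertex Bs_max.1) => B Bb neB.
rewrite !dot_lowfun !subr0 !dot_indic.
exact: max_weight_basis_lt omega_inj Bs_max Bb neB.
Qed.

Lemma cell_point (p q x : 'I_n -> R) :
  (forall i, 0 <= p i) -> \sum_i p i = 1 -> (forall i, i \in T -> p i = 0) ->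
  (forall i, 0 <= q i) -> \sum_i q i = 1 -> (forall i, i \in S -> q i = 0) ->
  (forall i, x i = p i * u%:R + indic R Bs i - q i * t%:R) ->
  cell M t u alpha beta omega x.
Proof.
move=> p_ge0 p_sum p_supp q_ge0 q_sum q_supp Ex.
exists (fun k =>
  \sum_(i in setT) p i * vtx1 i k + vtx2 Bs k + \sum_(i in setT) q i * vtx3 i k).
split; last by move=> j; rewrite /= !sum_sunit Ex mulrN.
apply: face_msum3; last 2 [exact/face_lift2].
- apply: (face_conv (m := - alpha o)) => //; rewrite ?sum_setT // => i _.
    exact: lowfun_vtx1_le.
  by move=> nz; apply: lowfun_vtx1_eq; apply: contra nz => /p_supp ->.
- apply: (face_conv (m := - beta o)) => //; rewrite ?sum_setT // => i _.
    exact: lowfun_vtx3_le.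
  by move=> nz; apply: lowfun_vtx3_eq; apply: contra nz => /q_supp ->.
Qed.

Lemma cellG_omega x : cellG M omega x <-> x =1 indic R Bs.
Proof.
split=> [[y [/face_lift2 Ey Ex]] i | Ex]; first by rewrite -Ex Ey.
by exists (vtx2 Bs); split=> [|i]; [exact/face_lift2 | rewrite Ex].
Qed.

Lemma is_vertex_Bs : is_vertex (PM M) (indic R Bs).
Proof.
exists omega; apply: (face_conv_vertex Bs_max.1) => B Bb neB.
by rewrite !dot_indic; exact: max_weight_basis_lt omega_inj Bs_max Bb neB.
Qed.

Lemma cell_vertex i j : i \notin T -> j \notin S ->
  cell M t u alpha beta omega (fun k => sunit u%:R i k + indic R Bs k + sunit (- t%:R) j k).
Proof.
have sunit_ge0 (l k : 'I_n) : 0 <= sunit 1 l k :> R by rewrite /sunit; case: ifP.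
have sunit_supp (l : 'I_n) A : l \notin A -> forall k, k \in A -> sunit 1 l k = 0 :> R.
  by move=> A'l k Ak; rewrite /sunit; case: eqP => // kl; rewrite -kl Ak in A'l.
move=> T'i S'j; apply: (cell_point (p := sunit 1 i) (q := sunit 1 j));
  rewrite ?sum_sunitr //; try exact: sunit_supp.
move=> k; rewrite /sunit.
by case: (k == i); case: (k == j); rewrite ?mul1r ?mul0r ?mulN1r ?oppr0.
Qed.

Lemma cell_omega_maximal : maximal_cell M t u alpha beta omega.
Proof.
move=> w' sub; pose d := omega o - w' o.
have dot_vertex (c : 'I_n -> R) i j :
    dot c (fun k => sunit u%:R i k + indic R Bs k + sunit (- t%:R) j k) =
    c i * u%:R + dot c (indic R Bs) - c j * t%:R.
  by rewrite (dotD3 c (fun k => erefl)) !dot_sunit mulrN.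
have shift i j : i \notin T -> j \notin S ->
    (omega i - w' i) * u%:R - (omega j - w' j) * t%:R = d * u%:R - d * t%:R.
  move=> T'i S'j; have oT : o \notin T by rewrite inE eqxx.
  have := lower_faces_dot (cell_vertex T'i S'j) (cell_vertex oT oS)
    (sub _ (cell_vertex T'i S'j)) (sub _ (cell_vertex oT oS)).
  rewrite !dot_vertex /d !mulrBl; lra.
have omega_shift i : omega i = w' i + d.
  case: (boolP (i \in T)) => Ti; last first.
    have := shift i o Ti oS; rewrite -/d => E.
    have : (omega i - w' i) * u%:R = d * u%:R by lra.
    by move/(mulIf (lt0r_neq0 uR_gt0)); lra.
  have S'i : i \notin S by move: Ti; rewrite inE => /andP[].
  have oT : o \notin T by rewrite inE eqxx.
  have := shift o i oT S'i; rewrite -/d => E.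
  have : (omega i - w' i) * t%:R = d * t%:R by lra.
  by move/(mulIf (lt0r_neq0 tR_gt0)); lra.
have lift_shift y : Lift M t u alpha beta y ->
    dot (lowfun omega) y = dot (lowfun w') y + d * (u%:R + #|Bs|%:R - t%:R).
  move=> Ly; rewrite !dot_lowfun -(bigPoly_sum Bs_max.1 (proj_Lift Ly)) mulr_sumr.
  rewrite /dot addrAC -big_split /=; congr (_ - _).
  by apply: eq_bigr => k _; rewrite omega_shift mulrDl.
move=> x [y [face_y Ey]]; exists y; split=> //.
exact: face_shift lift_shift face_y.
Qed.

Lemma bigPoly_sums (x : 'I_n -> R) : bigPoly M t u x ->
  [/\ \sum_(i in S) x i <= u%:R + #|S :&: Bs|%:R,
      - t%:R + #|T :&: Bs|%:R <= \sum_(i in T) x i &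
      \sum_i x i = u%:R + #|Bs|%:R - t%:R].
Proof.
move=> Px; split; last exact: bigPoly_sum Bs_max.1 Px.
all: have [a [b [c [Da [Pb [Nc Ex]]]]]] := Px.
all: rewrite (eq_bigr _ (fun i _ => Ex i)) !big_split /=.
- have /andP[_ le_a] := uDelta_sum_sub S Da; have /andP[_ le_c] := tNabla_sum_sub S Nc.
  suff : \sum_(i in S) b i <= #|S :&: Bs|%:R by lra.
  rewrite -dot_indicl; apply: (conv_dot_le Pb) => B Bb.
  rewrite dot_indicl sum_indic ler_nat setIC [S :&: _]setIC.
  exact: max_weight_basis_meet Bs_max Bb upper_set_S.
- have /andP[ge_a _] := uDelta_sum_sub T Da; have /andP[ge_c _] := tNabla_sum_sub T Nc.
  suff : #|T :&: Bs|%:R <= \sum_(i in T) b i by lra.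
  rewrite -dot_indicl; apply: (conv_dot_ge Pb) => B Bb.
  rewrite dot_indicl sum_indic ler_nat setIC [T :&: _]setIC.
  exact: max_weight_basis_meetC Bs_max Bb upper_set_notT.
Qed.

Lemma cell_omega_bigPoly (x : 'I_n -> R) : bigPoly M t u x ->
  (forall i, i \in S -> indic R Bs i <= x i) -> (forall i, i \in T -> x i <= indic R Bs i) ->
  cell M t u alpha beta omega x.
Proof.
move=> Px ge_S le_T; have [sum_S sum_T sum_x] := bigPoly_sums Px.
pose y i := x i - indic R Bs i.
have sum_y (A : {set 'I_n}) : \sum_(i in A) y i = \sum_(i in A) x i - #|A :&: Bs|%:R.
  by rewrite sumrB sum_indic.
have y_S : \sum_(i in S) y i <= u%:R by rewrite sum_y; lra.
have y_T : - t%:R <= \sum_(i in T) y i by rewrite sum_y; lra.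
have y_o : y o = u%:R - t%:R - \sum_(i in S) y i - \sum_(i in T) y i.
  by have := sum_coord y; rewrite -sum_setT (sum_y setT) setTI sum_setT sum_x; lra.
(* u p collects y on S, -t q collects y on T, and the slack goes to o. *)
pose p i := if i \in S then y i / u%:R else if i \in T then 0
  else 1 - (\sum_(k in S) y k) / u%:R.
pose q i := if i \in S then 0 else if i \in T then - y i / t%:R
  else 1 + (\sum_(k in T) y k) / t%:R.
have p_o : p o = 1 - (\sum_(k in S) y k) / u%:R by rewrite /p (negbTE oS) inE eqxx.
have q_o : q o = 1 + (\sum_(k in T) y k) / t%:R by rewrite /q (negbTE oS) inE eqxx.
have p_S i : i \in S -> p i = y i / u%:R by rewrite /p => ->.
have q_T i : i \in T -> q i = - y i / t%:R by rewrite /q; case: (coordP i).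
have p_T i : i \in T -> p i = 0 by rewrite /p; case: (coordP i).
have q_S i : i \in S -> q i = 0 by rewrite /q => ->.
apply: (cell_point (p := p) (q := q)) => //.
- move=> i; case: (coordP i) => [-> | Si _ | Ti _]; last by rewrite p_T.
    rewrite p_o; suff : (\sum_(k in S) y k) / u%:R <= 1 by lra.
    by rewrite ler_pdivrMr // mul1r.
  by rewrite p_S // divr_ge0 ?ler0n // subr_ge0 ge_S.
- rewrite sum_coord p_o (eq_bigr _ p_S) (eq_bigr _ p_T) big1_eq -mulr_suml; lra.
- move=> i; case: (coordP i) => [-> | Si _ | Ti _].
  + rewrite q_o; suff : -1 <= (\sum_(k in T) y k) / t%:R by lra.
    by rewrite ler_pdivlMr // mulN1r.
  + by rewrite q_S.
  + by rewrite q_T // divr_ge0 ?ler0n // oppr_ge0 subr_le0 le_T.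
- rewrite sum_coord q_o (eq_bigr _ q_S) (eq_bigr _ q_T) big1_eq -mulr_suml sumrN; lra.
move=> i; case: (coordP i) => [-> | Si _ | Ti _].
- rewrite p_o q_o !mulrDl !mul1r mulNr !divfK ?lt0r_neq0 //.
  have -> : x o = y o + indic R Bs o by rewrite addrNK.
  lra.
- by rewrite p_S // q_S // divfK ?lt0r_neq0 // mul0r /y; lra.
- by rewrite p_T // q_T // divfK ?lt0r_neq0 // mul0r /y; lra.
Qed.

End TopDegreeCell.

Lemma ord_homo_inj (R : realFieldType) n (f : 'I_n -> R) :
  (forall i j : 'I_n, (i < j)%N -> f i < f j) -> injective f.
Proof.
move=> f_mono i j Ef; apply: val_inj.
by case: (ltngtP i j) => // /f_mono; rewrite Ef ltxx.
Qed.

Theorem mainTheorem6 (R : realFieldType) (n : nat) (M : matroid n) (t u : nat)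
    (alpha beta : 'I_n -> R) :
  (0 < t)%N -> (0 < u)%N ->
  (forall i, 0 < alpha i) -> (forall i j : 'I_n, (i < j)%N -> alpha i < alpha j) ->
  (forall i, 0 < beta i) -> (forall i j : 'I_n, (i < j)%N -> beta i < beta j) ->
  forall x : 'I_n -> R,
    (exists z : 'I_n -> int, forall i, x i = (z i)%:~R) ->
    bigPoly M t u x ->
    exists w : 'I_n -> R, top_degree M t u alpha beta w /\ cell M t u alpha beta w x.
Proof.
case: n M alpha beta => [|n] M alpha beta t_gt0 u_gt0 _ alpha_mono _ beta_mono x [z Ex] Px.
  by have [a [_ [_ [Da _]]]] := Px; have [[]] := conv_mem Da.
pose S := [set i | (i != ord0) && (1 <= x i)].
have oS : ord0 \notin S by rewrite inE eqxx.
have mono_o (f : 'I_n.+1 -> R) : (forall i j : 'I_n.+1, (i < j)%N -> f i < f j) ->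
    forall i, i != ord0 -> f ord0 < f i.
  by move=> f_mono i ne; apply: f_mono; rewrite lt0n.
have [alpha_o beta_o] := (mono_o _ alpha_mono, mono_o _ beta_mono).
have [alpha_inj beta_inj] := (ord_homo_inj alpha_mono, ord_homo_inj beta_mono).
have [Bs Bs_max] := max_weight_basis_exists M (omega t u alpha beta ord0 S).
exists (omega t u alpha beta ord0 S); split.
  split; first exact: cell_omega_maximal Bs_max.
  exists (indic R Bs); split; [exact: is_vertex_Bs Bs_max | exact: cellG_omega Bs_max].
apply: (cell_omega_bigPoly t_gt0 u_gt0 oS alpha_o alpha_inj beta_o beta_inj Bs_max Px) => i.
  by rewrite inE => /andP[_]; apply: le_trans; rewrite /indic; case: ifP.
rewrite !inE => /andP[ne]; rewrite ne /= Ex ler1z -ltNge => z_lt1.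
apply: le_trans (_ : 0 <= _); last by rewrite /indic; case: ifP.
by rewrite lerz0; lia.
Qed.
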